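(* Let $F$ be a fixed connected graph. Then, as $n\to\infty$, $$\binom{n}{2}\le L(n,F)+\mathrm{exa}_1(n,F)\le \binom{n}{2}+O(n).$$ Consequently, if $F$ is not a tree, then $L(n,F)=\binom{n}{2}-(1+o(1))\,\mathrm{ex}(n,F)$.
   Context: $\mathrm{exa}_1(n,F)$ is the largest number of edges of a simple graph on $n$ vertices containing exactly one subgraph isomorphic to $F$; $\mathrm{ex}(n,F)$ is the largest number of edges of a graph on $n$ vertices containing no subgraph isomorphic to $F$. Search game: given a vertex set $V$ with $|V|=n$, an unknown edge set $E_0$ of pairs from $V$ is hidden such that the graph $(V,E_0)$ is isomorphic to $F$ together with $n-|V(F)|$ isolated vertices. A query is a pair of vertices of $V$, answered YES if it belongs to $E_0$ and NO otherwise; queries may be chosen adaptively. The game ends when $E_0$ is determined, i.e. exactly one such edge set is consistent with all answers. $L(n,F)$ is the minimum, over all questioning strategies, of the maximum over all possible $E_0$ of the number of queries asked. *)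

From mathcomp Require Import all_boot all_order all_algebra.
From Stdlib Require Import ClassicalEpsilon.
Set Implicit Arguments. Unset Strict Implicit. Unset Printing Implicit Defensive.

(* The fixed graph F: vertex set 'I_k, adjacency Fadj (assumed symmetric and
   irreflexive in the theorem). *)

Definition connected_graph (k : nat) (Fadj : rel 'I_k) : Prop :=
  forall x y : 'I_k, connect Fadj x y.

Definition is_tree (k : nat) (Fadj : rel 'I_k) : Prop :=
  connected_graph Fadj /\
  ~ (exists s : seq 'I_k, [/\ uniq s, 3 <= size s & cycle Fadj s]).

(* A simple graph on 'I_n is an edge set: a set of 2-element subsets. *)
Definition simpleb (n : nat) (G : {set {set 'I_n}}) : bool :=
  [forall e in G, #|e| == 2].

Definition embed (k n : nat) (Fadj : rel 'I_k) (f : 'I_k -> 'I_n)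
  : {set {set 'I_n}} :=
  [set [set f x.1; f x.2] | x in [set p : 'I_k * 'I_k | Fadj p.1 p.2]].

(* Edge sets E0 on 'I_n such that ('I_n, E0) is isomorphic to F plus
   n - |V(F)| isolated vertices, i.e. E0 is the image of E(F) under an
   injection V(F) -> 'I_n. *)
Definition hyp (k n : nat) (Fadj : rel 'I_k) : {set {set {set 'I_n}}} :=
  [set E | [exists f : {ffun 'I_k -> 'I_n}, injectiveb f && (E == embed Fadj f)]].

(* The copies of F in G (F connected without isolated vertices, so a
   subgraph isomorphic to F is determined by its edge set). *)
Definition copies (k n : nat) (Fadj : rel 'I_k) (G : {set {set 'I_n}})
  : {set {set {set 'I_n}}} :=
  [set E in hyp n Fadj | E \subset G].

Definition ex (k : nat) (Fadj : rel 'I_k) (n : nat) : nat :=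
  \max_(G : {set {set 'I_n}} | simpleb G && (copies Fadj G == set0)) #|G|.

Definition exa1 (k : nat) (Fadj : rel 'I_k) (n : nat) : nat :=
  \max_(G : {set {set 'I_n}} | simpleb G && (#|copies Fadj G| == 1)) #|G|.

(* Adaptive questioning strategies = binary decision trees: at a node
   [Ask q ty tn] the pair q is queried; continue with ty on YES, tn on NO. *)
Inductive strategy (n : nat) : Type :=
  | Stop : strategy n
  | Ask : {set 'I_n} -> strategy n -> strategy n -> strategy n.

Fixpoint queries_are_pairs (n : nat) (t : strategy n) : bool :=
  match t with
  | Stop => true
  | Ask q ty tn => [&& #|q| == 2, queries_are_pairs ty & queries_are_pairs tn]
  end.

Fixpoint transcript (n : nat) (t : strategy n) (E : {set {set 'I_n}})
  : seq ({set 'I_n} * bool) :=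
  match t with
  | Stop => [::]
  | Ask q ty tn =>
      let b := q \in E in (q, b) :: transcript (if b then ty else tn) E
  end.

(* A strategy wins if, whenever it stops, exactly one admissible E0 is
   consistent with all answers (two admissible sets are consistent with the
   same answers iff they produce the same transcript). *)
Definition determines (k n : nat) (Fadj : rel 'I_k) (t : strategy n) : Prop :=
  queries_are_pairs t /\
  forall E E', E \in hyp n Fadj -> E' \in hyp n Fadj ->
    transcript t E = transcript t E' -> E = E'.

Definition achievable (k : nat) (Fadj : rel 'I_k) (n d : nat) : Prop :=
  exists t : strategy n, determines Fadj t /\
    forall E, E \in hyp n Fadj -> size (transcript t E) <= d.

Definition L (k : nat) (Fadj : rel 'I_k) (n : nat) : nat :=
  epsilon (inhabits 0%N)
    (fun d => achievable Fadj n d /\ forall d', achievable Fadj n d' -> d <= d').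

(* Lower bound: an adversary answers NO whenever some copy of F consistent with
   the answers so far avoids the queried pair.  When the strategy stops, the set
   N of NO-answered pairs singles out the hidden copy, so the complete graph
   minus N contains exactly one copy of F: C(n,2) - |N| <= exa_1(n,F), and at
   least |N| questions were asked.
   Upper bound: fix an F-free graph G with ex(n,F) edges.  Ask non-edges of G
   until a YES arrives (one must, since G is F-free), then only pairs meeting
   the set K of vertices covered by YES answers.  As F is connected, K ends up
   containing the whole hidden copy, all of whose edges have then been asked.
   Every question is a non-edge of G or meets one of the at most k vertices of
   the copy, so L(n,F) <= C(n,2) - ex(n,F) + kn; and exa_1 <= ex + 1.
   If F is not a tree it has a cycle of length at most k, so ex(n,F) is at
   least the size of a maximum graph of maximum degree d without cycles of
   length 3..k.  In such a graph any two vertices of degree < d are at distance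
   at most k (otherwise joining them keeps the constraints), so there are at
   most (d+1)^k of them and the graph has at least d(n - (d+1)^k)/2 edges:
   ex(n,F) is superlinear, which turns the O(n) error into o(ex(n,F)). *)

From mathcomp Require Import all_boot all_order all_algebra.
From mathcomp Require Import boolp zify ring lra.
From Stdlib Require Import ClassicalEpsilon.
Set Implicit Arguments. Unset Strict Implicit. Unset Printing Implicit Defensive.

Definition pairs (T : finType) : {set {set T}} := [set e : {set T} | #|e| == 2].

Lemma card_pairs n : #|pairs 'I_n| = 'C(n, 2).
Proof. by rewrite card_draws card_ord. Qed.

Lemma simplebE n (G : {set {set 'I_n}}) : simpleb G = (G \subset pairs 'I_n).
Proof. by apply/forall_inP/subsetP => sG e /sG; rewrite inE. Qed.

Lemma card_simple n (G : {set {set 'I_n}}) : simpleb G -> #|G| <= 'C(n, 2).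
Proof. by rewrite simplebE -card_pairs; apply: subset_leq_card. Qed.

Section Copies.
Variables (k : nat) (Fadj : rel 'I_k).

Lemma hypP n E :
  reflect (exists f : {ffun 'I_k -> 'I_n}, injective f /\ E = embed Fadj f)
          (E \in hyp n Fadj).
Proof.
rewrite inE; apply: (iffP existsP) => [[f /andP [/injectiveP If /eqP ->]]|[f [If ->]]].
  by exists f.
by exists f; rewrite eqxx andbT; apply/injectiveP.
Qed.

Lemma mem_embed n (f : 'I_k -> 'I_n) a b :
  Fadj a b -> [set f a; f b] \in embed Fadj f.
Proof. by move=> ab; apply/imsetP; exists (a, b); rewrite ?inE. Qed.

Lemma hyp_pairs n E : irreflexive Fadj -> E \in hyp n Fadj -> E \subset pairs 'I_n.
Proof.
move=> irr /hypP [f [If ->]]; apply/subsetP => e /imsetP [[a b]].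
rewrite !inE /= => ab ->; rewrite cards2 (inj_eq If).
by case: (eqVneq a b) ab => [->|]; rewrite ?irr.
Qed.

Lemma hyp_neq0 n E : connected_graph Fadj -> 2 <= k -> E \in hyp n Fadj -> E != set0.
Proof.
move=> conn k2 /hypP [f [_ ->]]; apply/set0Pn.
case/connectP: (conn (Ordinal (ltnW k2)) (Ordinal k2)) => [[|c p]] /=.
  by move=> _ /(congr1 val).
by case/andP => ac _ _; exists [set f (Ordinal (ltnW k2)); f c]; apply: mem_embed.
Qed.

Lemma hyp_nonempty n : k <= n -> hyp n Fadj != set0.
Proof.
move=> kn; apply/set0Pn; exists (embed Fadj [ffun i => widen_ord kn i]).
apply/hypP; exists [ffun i => widen_ord kn i]; split => //.
by move=> i j; rewrite !ffunE => /(congr1 val) /= /val_inj.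
Qed.

Definition vertices n (E : {set {set 'I_n}}) : {set 'I_n} := \bigcup_(e in E) e.

Lemma card_vertices_hyp n E : E \in hyp n Fadj -> #|vertices E| <= k.
Proof.
move=> /hypP [f [_ ->]].
have sub : vertices (embed Fadj f) \subset [set f x | x in 'I_k].
  apply/bigcupsP => _ /imsetP [[a b] _ ->].
  by apply/subsetP => x; rewrite !inE => /orP [] /eqP ->; apply: imset_f.
apply: leq_trans (subset_leq_card sub) _.
by apply: leq_trans (leq_imset_card _ _) _; rewrite card_ord.
Qed.

Lemma leq_ex n (G : {set {set 'I_n}}) :
  simpleb G -> copies Fadj G = set0 -> #|G| <= ex Fadj n.
Proof. by move=> sG cG; apply: leq_bigmax_cond; rewrite sG cG eqxx. Qed.

Lemma leq_exa1 n (G : {set {set 'I_n}}) :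
  simpleb G -> #|copies Fadj G| = 1 -> #|G| <= exa1 Fadj n.
Proof. by move=> sG cG; apply: leq_bigmax_cond; rewrite sG cG eqxx. Qed.

Lemma ex_attained n : connected_graph Fadj -> 2 <= k ->
  exists G : {set {set 'I_n}}, [/\ simpleb G, copies Fadj G = set0 & #|G| = ex Fadj n].
Proof.
move=> conn k2.
have set0_free : copies Fadj (set0 : {set {set 'I_n}}) = set0.
  apply/setP => E; rewrite [E \in copies _ _]inE in_set0 subset0.
  by case EH: (E \in hyp n Fadj); rewrite /= ?(negbTE (hyp_neq0 conn k2 EH)).
have [|G] := @eq_bigmax_cond _ [pred G : {set {set 'I_n}} | simpleb G && (copies Fadj G == set0)]
  (fun G => #|G|).
  apply/card_gt0P; exists set0; rewrite inE set0_free eqxx andbT.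
  by apply/forall_inP => e; rewrite inE.
by rewrite inE => /andP [sG /eqP cG] eG; exists G.
Qed.

Lemma exa1_le_ex_succ n : irreflexive Fadj -> connected_graph Fadj -> 2 <= k ->
  exa1 Fadj n <= (ex Fadj n).+1.
Proof.
move=> irr conn k2; apply/bigmax_leqP => G /andP [sG /cards1P [H cH]].
have /setIdP [HH /subsetP HG] : H \in copies Fadj G by rewrite cH set11.
have /set0Pn [e eH] := hyp_neq0 conn k2 HH.
have sGe : simpleb (G :\ e).
  by move: sG; rewrite !simplebE; apply: subset_trans; apply: subsetDl.
suff /(leq_ex sGe) : copies Fadj (G :\ e) = set0.
  by rewrite (cardsD1 e G) HG.
apply/setP => E; rewrite in_set0; apply/setIdP => -[EH EGe].
have : E \in copies Fadj G by apply/setIdP; split; last exact: subset_trans EGe (subsetDl _ _).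
rewrite cH inE => /eqP EH'; move/subsetP: EGe => /(_ e); rewrite EH' => /(_ eH).
by rewrite !inE eqxx.
Qed.

End Copies.

Lemma disjointsU1 (T : finType) (a : T) (A B : {set T}) :
  [disjoint a |: A & B] = (a \notin B) && [disjoint A & B].
Proof. by rewrite -!setI_eq0 setIUl setU_eq0 setI_eq0 disjoints1. Qed.

Lemma adversary_certificate n (t : strategy n) (S : {set {set {set 'I_n}}}) :
  S != set0 -> {in S &, injective (transcript t)} ->
  exists2 E0, E0 \in S & exists N : {set {set 'I_n}},
    [/\ #|N| <= size (transcript t E0), [disjoint N & E0] &
        {in S, forall E : {set {set 'I_n}}, [disjoint N & E] -> E = E0}].
Proof.
elim: t S => [|q ty IHy tn IHn] S /set0Pn [E1 E1S] sep.
  exists E1 => //; exists set0; split; rewrite ?cards0 -?setI_eq0 ?set0I //.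
  by move=> E ES _; apply: sep.
have [allq|/forall_inPn [E2 E2S qE2]] := boolP [forall E in S, q \in E].
  have [||E0 E0S [N [cardN disjN uniqN]]] := IHy S; first by apply/set0Pn; exists E1.
    move=> E E' ES ES' /= eqt; apply: sep => //=.
    by rewrite (forall_inP allq _ ES) (forall_inP allq _ ES') eqt.
  exists E0 => //; exists N; split => //=.
  by rewrite (forall_inP allq _ E0S) ltnW.
pose S' := [set E in S | q \notin E].
have [||E0 /setIdP [E0S qE0] [N [cardN disjN uniqN]]] := IHn S'.
- by apply/set0Pn; exists E2; rewrite inE E2S.
- move=> E E' /setIdP [ES qE] /setIdP [ES' qE'] /= eqt.
  by apply: sep => //=; rewrite (negbTE qE) (negbTE qE') eqt.
exists E0 => //; exists (q |: N); split.
- by rewrite /= (negbTE qE0) cardsU1 -add1n leq_add ?leq_b1.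
- by rewrite disjointsU1 disjN qE0 andbT.
- move=> E ES; rewrite disjointsU1 => /andP [qE disjE].
  by apply: uniqN; rewrite ?inE ?ES.
Qed.

Lemma achievable_lower_bound k (Fadj : rel 'I_k) n d :
  irreflexive Fadj -> k <= n -> achievable Fadj n d -> 'C(n, 2) <= d + exa1 Fadj n.
Proof.
move=> irr kn [t [[_ sep] cost]].
have [E0 E0H [N [cardN disjN uniqN]]] := adversary_certificate (hyp_nonempty Fadj kn) sep.
pose G := pairs 'I_n :\: N.
have copiesG : copies Fadj G = [set E0].
  apply/setP => E; rewrite inE in_set1; apply/andP/eqP => [[EH EG]|->].
    by apply: uniqN => //; move: EG; rewrite subsetD disjoint_sym => /andP [].
  by split => //; rewrite subsetD (hyp_pairs irr E0H) disjoint_sym.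
have : 'C(n, 2) <= #|G| + #|N|.
  rewrite -card_pairs -[X in X <= _](cardsID N (pairs 'I_n)) addnC leq_add2l.
  by apply/subset_leq_card/subsetIr.
have : #|G| <= exa1 Fadj n by rewrite leq_exa1 ?simplebE ?subsetDl ?copiesG ?cards1.
have := cost E0 E0H; lia.
Qed.

Lemma connected_closed k (Fadj : rel 'I_k) (P : pred 'I_k) :
  connected_graph Fadj -> (forall a b, Fadj a b -> P a -> P b) ->
  forall x y, P x -> P y.
Proof.
move=> conn closedP x y; case/connectP: (conn x y) => p.
elim: p x => [|z p IHp] x /=; first by move=> _ ->.
by case/andP => xz pz ly Px; apply: IHp pz ly (closedP _ _ xz Px).
Qed.

Section GreedyStrategy.
Variables (n : nat) (G : {set {set 'I_n}}).

Local Notation history := (seq ({set 'I_n} * bool)).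

Definition known_vertices (h : history) : {set 'I_n} :=
  [set x | has (fun p : {set 'I_n} * bool => p.2 && (x \in p.1)) h].

Definition fresh_query (h : history) (q : {set 'I_n}) : bool :=
  [&& q \in pairs 'I_n, q \notin map fst h &
      if known_vertices h == set0 then q \notin G else q :&: known_vertices h != set0].

Definition next_query (h : history) : option {set 'I_n} := [pick q | fresh_query h q].

Fixpoint greedy (fuel : nat) (h : history) : strategy n :=
  if fuel is fuel'.+1 then
    if next_query h is Some q then
      Ask q (greedy fuel' (rcons h (q, true))) (greedy fuel' (rcons h (q, false)))
    else Stop n
  else Stop n.

Lemma greedy_pairs fuel h : queries_are_pairs (greedy fuel h).
Proof.
elim: fuel h => // fuel IH h /=; rewrite /next_query; case: pickP => // q.
by case/and3P; rewrite inE => q2 _ _ /=; rewrite q2 !IH.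
Qed.

Variable E : {set {set 'I_n}}.

Definition consistent (h : history) : bool := all (fun p => p.2 == (p.1 \in E)) h.

Definition chargeable : {set {set 'I_n}} :=
  [set q in pairs 'I_n | (q \notin G) || (q :&: vertices E != set0)].

Definition sound (h : history) : bool :=
  [&& uniq (map fst h), consistent h & all [in chargeable] (map fst h)].

Lemma mem_consistent h q : consistent h -> q \in map fst h -> (q, q \in E) \in h.
Proof. by move=> /allP cons /mapP [[q' b] qh ->]; move/eqP: (cons _ qh) => /= <-. Qed.

Lemma asked_edge_known h e :
  consistent h -> e \in E -> e \in map fst h -> e \subset known_vertices h.
Proof.
move=> cons eE /(mem_consistent cons); rewrite eE => eh.
by apply/subsetP => x xe; rewrite inE; apply/hasP; exists (e, true); rewrite /= ?xe.
Qed.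

Lemma known_vertices_sub h : consistent h -> known_vertices h \subset vertices E.
Proof.
move=> /allP cons; apply/subsetP => x; rewrite inE => /hasP [[q b] qh /andP [/= bT xq]].
by apply/bigcupP; exists q; rewrite // -(eqP (cons _ qh)).
Qed.


Lemma sound_rcons h q : sound h -> fresh_query h q -> sound (rcons h (q, q \in E)).
Proof.
case/and3P => uh ch ah /and3P [q2 qh qK]; apply/and3P; split.
- by rewrite map_rcons rcons_uniq qh.
- by rewrite /consistent all_rcons eqxx.
rewrite map_rcons all_rcons ah andbT inE q2 /=.
move: qK; case: ifP => _ qK; first by rewrite qK.
apply/orP; right; apply: contraNneq qK => qV.
by rewrite -subset0 -qV setIS // known_vertices_sub.
Qed.

(* Queries of a sound history are distinct sets, so the fuel can only run out
   once no fresh query is left. *)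
Lemma greedy_run fuel h : sound h ->
  let h' := h ++ transcript (greedy fuel h) E in
  sound h' /\ (#|{set 'I_n}| < fuel + size h -> next_query h' = None).
Proof.
elim: fuel h => [|fuel IH] h sh /=.
  rewrite cats0; split => // big; case/and3P: sh => uh _ _.
  by move: big; rewrite add0n -(size_map fst) -(card_uniqP uh) ltnNge max_card.
rewrite /next_query; case: (pickP (fresh_query h)) => [q fq|none] /=.
  have [] := IH _ (sound_rcons sh fq); rewrite cat_rcons.
  by case: (q \in E) => sh' stop; split => // big; apply: stop; rewrite size_rcons addnS.
by rewrite cats0; split => // _; case: pickP => // q; rewrite none.
Qed.

End GreedyStrategy.

Section Stuck.
Variables (k : nat) (Fadj : rel 'I_k) (n : nat) (G E : {set {set 'I_n}}).
Variable h : seq ({set 'I_n} * bool).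
Hypotheses (irrF : irreflexive Fadj) (EH : E \in hyp n Fadj).
Hypotheses (cons : consistent E h) (stuck : next_query G h = None).

Lemma stuck_not_fresh q : ~~ fresh_query G h q.
Proof. by move: stuck; rewrite /next_query; case: pickP => // ->. Qed.

Lemma stuck_known_neq0 : copies Fadj G = set0 -> known_vertices h != set0.
Proof.
move=> freeG; apply/negP => /eqP K0.
suff EG : E \subset G by move/setP/(_ E): freeG; rewrite in_set0 => /setIdP; apply.
apply/subsetP => e eE; have e2 := subsetP (hyp_pairs irrF EH) e eE.
have [eh|eh] := boolP (e \in map fst h).
  have := asked_edge_known cons eE eh; rewrite K0 subset0 => /eqP e0.
  by move: e2; rewrite e0 inE cards0.
by move: (stuck_not_fresh e); rewrite /fresh_query e2 eh K0 eqxx negbK.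
Qed.

Lemma stuck_edges_asked : connected_graph Fadj -> copies Fadj G = set0 ->
  {subset E <= map fst h}.
Proof.
move=> conn freeG; have K0 := stuck_known_neq0 freeG.
have asked e : e \in E -> e :&: known_vertices h != set0 -> e \in map fst h.
  move=> eE eK; apply: contraT => eh; move: (stuck_not_fresh e).
  by rewrite /fresh_query (subsetP (hyp_pairs irrF EH)) // eh (negbTE K0) eK.
case/hypP: (EH) => f [_ Ef].
have edge_asked a b :
    Fadj a b -> f a \in known_vertices h -> [set f a; f b] \in map fst h.
  move=> ab aK; apply: asked; first by rewrite Ef mem_embed.
  by apply/set0Pn; exists (f a); rewrite in_setI aK set21.
have [x0 x0K] : exists x0, f x0 \in known_vertices h.
  case/set0Pn: K0 => x xK; case/bigcupP: (subsetP (known_vertices_sub cons) x xK) => e.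
  rewrite Ef => /imsetP [[a b] _ ->]; rewrite !inE => /orP [] /eqP xe.
  - by exists a; rewrite -xe.
  - by exists b; rewrite -xe.
have allK y : f y \in known_vertices h.
  move: x0K; apply: (connected_closed (P := fun y => f y \in known_vertices h) conn).
  move=> a b ab aK; have eE : [set f a; f b] \in E by rewrite Ef mem_embed.
  by apply: subsetP (asked_edge_known cons eE (edge_asked a b ab aK)) _ (set22 _ _).
by move=> e; rewrite Ef => /imsetP [[a b]]; rewrite inE => ab ->; apply: edge_asked.
Qed.

End Stuck.

Lemma card_chargeable k (Fadj : rel 'I_k) n (G E : {set {set 'I_n}}) :
  simpleb G -> E \in hyp n Fadj -> #|chargeable G E| <= 'C(n, 2) - #|G| + k * n.
Proof.
move=> sG EH.
pose B := [set [set p.1; p.2] | p in setX (vertices E) [set: 'I_n]].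
have sub : chargeable G E \subset (pairs 'I_n :\: G) :|: B.
  apply/subsetP => q /setIdP [q2 /orP [qG|/set0Pn [x]]]; first by rewrite in_setU in_setD qG q2.
  rewrite in_setI => /andP [xq xV]; apply/setUP; right.
  move: q2; rewrite inE => /cards2P [y [z [_ qyz]]].
  move: xq; rewrite qyz !inE => /orP [] /eqP xe.
    by apply/imsetP; exists (y, z); rewrite // in_setX -xe xV in_setT.
  by apply/imsetP; exists (z, y); rewrite ?in_setX -?xe ?xV ?in_setT // setUC.
apply: leq_trans (subset_leq_card sub) _; apply: leq_trans (leq_card_setU _ _) _.
rewrite cardsD card_pairs (setIidPr _) -?simplebE // leq_add2l.
apply: leq_trans (leq_imset_card _ _) _.
by rewrite cardsX cardsT card_ord leq_mul2r (card_vertices_hyp EH) orbT.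
Qed.

Section UpperBound.
Variables (k : nat) (Fadj : rel 'I_k) (n : nat) (G : {set {set 'I_n}}).

Definition greedy_strategy : strategy n := greedy G #|{set 'I_n}|.+1 [::].

Lemma greedy_strategy_stuck E : sound G E (transcript greedy_strategy E) /\
  next_query G (transcript greedy_strategy E) = None.
Proof.
have /= [sh stop] := @greedy_run n G E #|{set 'I_n}|.+1 [::] isT.
by split => //; apply: stop; rewrite addn0.
Qed.

Lemma greedy_strategy_cost E : size (transcript greedy_strategy E) <= #|chargeable G E|.
Proof.
have [/and3P [uh _ /allP ah] _] := greedy_strategy_stuck E.
by rewrite -(size_map fst) -(card_uniqP uh); apply/subset_leq_card/subsetP.
Qed.

Hypotheses (irrF : irreflexive Fadj) (conn : connected_graph Fadj).
Hypothesis freeG : copies Fadj G = set0.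

Lemma greedy_strategy_yes E : E \in hyp n Fadj ->
  E = [set q | (q, true) \in transcript greedy_strategy E].
Proof.
move=> EH; have [/and3P [_ cons _] stuck] := greedy_strategy_stuck E.
apply/setP => q; rewrite inE; apply/idP/idP => [qE|/(allP cons) /eqP //].
have := mem_consistent cons (stuck_edges_asked irrF EH cons stuck conn freeG qE).
by rewrite qE.
Qed.

Lemma greedy_strategy_determines : determines Fadj greedy_strategy.
Proof.
split; first exact: greedy_pairs.
by move=> E E' EH E'H eqt; rewrite (greedy_strategy_yes EH) (greedy_strategy_yes E'H) eqt.
Qed.

Lemma achievable_upper_bound :
  simpleb G -> achievable Fadj n ('C(n, 2) - #|G| + k * n).
Proof.
move=> sG; exists greedy_strategy; split; first exact: greedy_strategy_determines.
move=> E EH; apply: leq_trans (greedy_strategy_cost E) _.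
exact: card_chargeable sG EH.
Qed.

End UpperBound.

Lemma leq_card_bigcup (I T : finType) (P : {pred I}) (B : I -> {set T}) :
  #|\bigcup_(i in P) B i| <= \sum_(i in P) #|B i|.
Proof.
apply: (big_ind2 (fun (X : {set T}) m => #|X| <= m)) => [|X m Y p lXm lYp|//].
  by rewrite cards0.
exact: leq_trans (leq_card_setU X Y) (leq_add lXm lYp).
Qed.

Section Balls.
Variables (T : finType) (G : {set {set T}}).

Definition adj : rel T := fun x y => [set x; y] \in G.

Definition deg (x : T) : nat := #|[set e in G | x \in e]|.

Definition neighbours (x : T) : {set T} := [set y | adj x y].

Lemma adj_sym : symmetric adj.
Proof. by move=> x y; rewrite /adj setUC. Qed.

Lemma card_neighbours x : G \subset pairs T -> #|neighbours x| <= deg x.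
Proof.
move=> sG; have xx : ~~ adj x x.
  by apply/negP => /(subsetP sG); rewrite inE setUid cards1.
rewrite -(@card_in_imset _ _ (fun y => [set x; y])).
  apply/subset_leq_card/subsetP => e /imsetP [y]; rewrite inE => xy ->.
  by rewrite inE set21 andbT.
move=> y1 y2; rewrite !inE => xy1 xy2 e.
have : y1 \in [set x; y2] by rewrite -e set22.
rewrite !inE => /orP [] /eqP // y1x.
by move: xy1 xx; rewrite y1x => ->.
Qed.

Lemma handshake : G \subset pairs T -> \sum_x deg x = 2 * #|G|.
Proof.
move=> sG.
have degE x : deg x = \sum_(e in G) (x \in e).
  rewrite /deg -sum1_card (eq_bigl (fun e => (e \in G) && (x \in e))) => [|e]; last first.
    by rewrite inE.
  by rewrite big_mkcondr; apply: eq_bigr => e _; case: (x \in e).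
rewrite (eq_bigr _ (fun x _ => degE x)) exchange_big /= -sum1_card big_distrr /=.
apply: eq_bigr => e eG; have /(subsetP sG) := eG; rewrite inE => /eqP <-.
rewrite muln1 -sum1_card [RHS]big_mkcond; apply: eq_bigr => x _; by case: (x \in e).
Qed.

Fixpoint ball (r : nat) (x : T) : {set T} :=
  if r is r'.+1 then ball r' x :|: \bigcup_(y in neighbours x) ball r' y
  else [set x].

Lemma card_ball d r x :
  G \subset pairs T -> (forall y, deg y <= d) -> #|ball r x| <= d.+1 ^ r.
Proof.
move=> sG degG; elim: r x => [|r IH] x /=; first by rewrite cards1.
apply: leq_trans (leq_card_setU _ _) _; rewrite expnS mulSn leq_add ?IH //.
apply: leq_trans (leq_card_bigcup _ _) _.
apply: leq_trans (_ : _ <= \sum_(y in neighbours x) d.+1 ^ r) _; first exact: leq_sum.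
by rewrite sum_nat_const leq_mul2r (leq_trans (card_neighbours x sG)) ?orbT.
Qed.

Lemma subset_ball r s x : r <= s -> ball r x \subset ball s x.
Proof.
move=> /subnK <-; elim: (s - r) => //= m IH.
exact: subset_trans IH (subsetUl _ _).
Qed.

Lemma ball_center r x : x \in ball r x.
Proof. by apply: subsetP (subset_ball x (leq0n r)) _ (set11 x). Qed.

Lemma ball_path x p : path adj x p -> last x p \in ball (size p) x.
Proof.
elim: p x => [|y p IH] x /=; first by rewrite set11.
case/andP => xy py; apply/setUP; right.
by apply/bigcupP; exists y; [rewrite inE | apply: IH].
Qed.

Lemma ball_adj r x y z : y \in ball r x -> adj y z -> z \in ball r.+1 x.
Proof.
elim: r x => [|r IH] x /=.
  by rewrite inE => /eqP -> yz; apply/setUP; right; apply/bigcupP; exists z; rewrite ?inE.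
case/setUP => [yb|/bigcupP [w xw yb]] yz; apply/setUP; first by left; apply: IH yb yz.
by right; apply/bigcupP; exists w => //; apply: IH yb yz.
Qed.

Lemma ball_sym r x y : y \in ball r x -> x \in ball r y.
Proof.
elim: r x y => [|r IH] x y /=; first by rewrite !inE eq_sym.
case/setUP => [yb|/bigcupP [w xw yb]].
  by apply: subsetP (subset_ball y (leqnSn r)) _ (IH _ _ yb).
by apply: ball_adj (IH _ _ yb) _; move: xw; rewrite inE adj_sym.
Qed.

End Balls.

Section AddEdge.
Variables (T : finType) (G : {set {set T}}) (u v : T).
Local Notation G' := ([set u; v] |: G).

Lemma adj_setU1 x y : adj G' x y = ([set x; y] == [set u; v]) || adj G x y.
Proof. by rewrite /adj in_setU1. Qed.

Lemma adj_setU1_new x y : adj G' x y -> ~~ adj G x y -> x != u -> x = v.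
Proof.
rewrite adj_setU1 => /orP [/eqP xy|->//] _ xu.
have : x \in [set u; v] by rewrite -xy set21.
by rewrite !inE (negbTE xu) => /eqP.
Qed.

Lemma adj_setU1_off x y : x != u -> y != u -> adj G' x y -> adj G x y.
Proof.
move=> xu yu; rewrite adj_setU1 => /orP [/eqP xy|//].
have : u \in [set x; y] by rewrite xy set21.
by rewrite !inE => /orP [] /eqP ux; rewrite ux eqxx in xu yu.
Qed.

Lemma cycle_setU1_ball s : uniq s -> 3 <= size s ->
  cycle (adj G') s -> ~~ cycle (adj G) s -> v \in ball G (size s) u.
Proof.
move=> us s3 cs' ncs.
have u_in_s : u \in s.
  apply: contraNT ncs => nus; apply: (@sub_in_cycle _ [pred x | x != u] (adj G')) cs' => [x y|].
    by rewrite !inE; apply: adj_setU1_off.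
  by apply/allP => x xs; rewrite inE; apply: contraNneq nus => <-.
case: (rot_to u_in_s) => i t rot_s.
have size_s : size s = (size t).+1 by rewrite -(size_rot i s) rot_s.
case: t rot_s size_s => [|a t] rot_s size_s; first by rewrite size_s in s3.
have : uniq (u :: a :: t) by rewrite -rot_s rot_uniq.
have : cycle (adj G') (u :: a :: t) by rewrite -rot_s rot_cycle.
have : ~~ cycle (adj G) (u :: a :: t) by rewrite -rot_s rot_cycle.
rewrite /= !rcons_path => nc /and3P [ua pa bu] /and3P [].
rewrite !inE negb_or => /andP [u_a ut] at_ _.
have a_u : a != u by rewrite eq_sym.
have t_u : all [pred x | x != u] (a :: t).
  by apply/allP => x; rewrite inE => /predU1P [->|xt] //; apply: contraNneq ut => <-.
have paG : path (adj G) a t.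
  by apply: (@sub_in_path _ [pred x | x != u] (adj G')) pa => // x y; apply: adj_setU1_off.
have b_u : last a t != u := allP t_u (last a t) (mem_last a t).
have b_a : last a t != a.
  have : 0 < size t by move: s3; rewrite size_s.
  by case: (t) at_ => //= c w at_ _; apply: contraNneq at_ => <-; apply: mem_last.
have ball_small r x : r < size s -> x \in ball G r u -> x \in ball G (size s) u.
  by move=> /ltnW rs; apply: subsetP (subset_ball G u rs) x.
have [Gua|nGua] := boolP (adj G u a).
  have Gbu : ~~ adj G (last a t) u by apply: contra nc => Gbu; rewrite Gua paG.
  rewrite -(adj_setU1_new bu Gbu b_u); apply: (ball_small (size (a :: t))); first by rewrite size_s.
  by apply: ball_path; rewrite /= Gua.
have av : a = v by apply: (adj_setU1_new (y := u) _ _ a_u); rewrite adj_sym.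
have Gbu : adj G (last a t) u.
  by apply: contraT => nGbu; move: b_a; rewrite (adj_setU1_new bu nGbu b_u) -av eqxx.
rewrite -av; apply: (ball_small (size (rcons t u))); first by rewrite size_rcons size_s.
by apply: ball_sym; rewrite -[X in X \in _](last_rcons a t u); apply: ball_path; rewrite rcons_path paG.
Qed.

End AddEdge.

Section SparseGraphs.
Variables (T : finType) (d k : nat).

Definition short_cycle_free (G : {set {set T}}) : Prop :=
  forall s : seq T, uniq s -> 3 <= size s <= k -> ~~ cycle (adj G) s.

Definition sparse (G : {set {set T}}) : Prop :=
  [/\ G \subset pairs T, forall x, deg G x <= d & short_cycle_free G].

Lemma sparse0 : sparse set0.
Proof.
split => [|x|s _ /andP [s3 _]]; first exact: sub0set.
  by rewrite /deg (_ : [set _ in _ | _] = set0) ?cards0 //; apply/setP => e; rewrite !inE.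
by case: s s3 => [|x [|y s]] //= _; rewrite /adj inE.
Qed.

Lemma exists_max_sparse : exists2 G, sparse G &
  forall G' : {set {set T}}, sparse G' -> #|G'| <= #|G|.
Proof.
have [G /asboolP sG maxG] := @arg_maxnP _ set0 (fun G => `[< sparse G >]) (fun G => #|G|)
  (asboolT sparse0).
by exists G => // G' /asboolP; apply: maxG.
Qed.

Lemma deg_setU1 (G : {set {set T}}) u v w :
  deg ([set u; v] |: G) w <= (w \in [set u; v]) + deg G w.
Proof.
rewrite /deg; have [wuv|wuv] := boolP (w \in [set u; v]).
  apply: leq_trans (_ : #|[set u; v] |: [set e in G | w \in e]| <= _).
    by apply/subset_leq_card/subsetP => e; rewrite !inE => /andP [/orP [->|->] ->]; rewrite ?orbT.
  by rewrite cardsU1 leq_add2r leq_b1.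
apply/subset_leq_card/subsetP => e; rewrite !inE => /andP [/orP [/eqP eu|->] //].
by rewrite eu (negbTE wuv).
Qed.

Lemma sparse_setU1 G u v : sparse G -> deg G u < d -> deg G v < d ->
  v \notin ball G k u -> sparse ([set u; v] |: G).
Proof.
case=> pG degG scfG du dv far.
have uv : u != v by apply: contraNneq far => <-; apply: ball_center.
split.
- by rewrite subUset sub1set inE cards2 uv pG.
- move=> w; apply: leq_trans (deg_setU1 G u v w) _.
  have [|_] := boolP (w \in [set u; v]); last exact: degG.
  by rewrite !inE => /orP [] /eqP ->.
move=> s us /andP [s3 sk]; apply/negP => cs.
have ncs : ~~ cycle (adj G) s by apply: scfG; rewrite ?s3.
by move: far; rewrite (subsetP (subset_ball G u sk) _ (cycle_setU1_ball us s3 cs ncs)).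
Qed.

Lemma max_sparse_deficient_close G u v : 0 < k -> sparse G ->
  (forall G', sparse G' -> #|G'| <= #|G|) ->
  deg G u < d -> deg G v < d -> v \in ball G k u.
Proof.
move=> k0 sG maxG du dv; apply: contraT => far.
have uv_new : [set u; v] \notin G.
  apply: contra far => uvG; apply: subsetP (subset_ball G u k0) _ _.
  by apply: (ball_path (p := [:: v])); rewrite /= andbT.
by have := maxG _ (sparse_setU1 sG du dv far); rewrite cardsU1 uv_new ltnn.
Qed.

Lemma exists_sparse_dense : 0 < k ->
  exists2 G, sparse G & d * (#|T| - d.+1 ^ k) <= 2 * #|G|.
Proof.
move=> k0; have [G sG maxG] := exists_max_sparse; exists G => //.
case: (sG) => pG degG _; pose D := [set x | deg G x < d].
have cardD : #|D| <= d.+1 ^ k.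
  have [->|[u uD]] := set_0Vmem D; first by rewrite cards0.
  apply: leq_trans (card_ball k u pG degG); apply/subset_leq_card/subsetP => v vD.
  by move: uD vD; rewrite !inE; apply: max_sparse_deficient_close.
have sumD : \sum_x (if x \in D then 0 else d) = #|~: D| * d.
  rewrite -sum_nat_const [RHS]big_mkcond /=; apply: eq_bigr => x _.
  by rewrite in_setC; case: (x \in D).
rewrite -handshake //; apply: (@leq_trans (\sum_x (if x \in D then 0 else d))).
  by rewrite sumD cardsCs setCK mulnC leq_mul2r leq_sub2l ?orbT.
by apply: leq_sum => x _; case: ifP => //; rewrite inE => /negbT; rewrite -leqNgt.
Qed.

End SparseGraphs.

Lemma not_tree_short_cycle k (Fadj : rel 'I_k) : connected_graph Fadj -> ~ is_tree Fadj ->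
  exists s : seq 'I_k, [/\ uniq s, 3 <= size s <= k & cycle Fadj s].
Proof.
move=> conn ntree.
have [[s [us s3 cs]]|] := pselect (exists s : seq 'I_k, [/\ uniq s, 3 <= size s & cycle Fadj s]).
  exists s; split => //; rewrite s3; move/card_uniqP: (us) => <-.
  by rewrite -[k in _ <= k]card_ord max_card.
by move=> nocycle; case: ntree.
Qed.

Lemma ex_lower_bound k (Fadj : rel 'I_k) n d : connected_graph Fadj -> ~ is_tree Fadj ->
  d * (n - d.+1 ^ k) <= 2 * ex Fadj n.
Proof.
move=> conn ntree; have [c [uc /andP [c3 ck] cc]] := not_tree_short_cycle conn ntree.
have [|G [pG _ scfG]] := @exists_sparse_dense 'I_n d k; first lia.
rewrite card_ord => dense; apply: leq_trans dense _; rewrite leq_mul2l leq_ex ?orbT //.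
  by rewrite simplebE.
apply/setP => E; rewrite in_set0; apply/setIdP => -[/hypP [f [If ->]] /subsetP EG].
have := scfG (map f c); rewrite map_inj_uniq // size_map c3 ck cycle_map => /(_ uc isT).
by apply/negP/negPn; apply: sub_cycle cc => a b ab; apply/EG/mem_embed.
Qed.

Lemma ex_superlinear k (Fadj : rel 'I_k) : connected_graph Fadj -> ~ is_tree Fadj ->
  forall D, exists N, forall n, N <= n -> D * n <= ex Fadj n.
Proof.
move=> conn ntree D; exists (2 * (4 * D).+1 ^ k) => n nN.
have := ex_lower_bound n (4 * D) conn ntree.
move: nN; set M := (4 * D).+1 ^ k; nia.
Qed.

Lemma L_minimal k (Fadj : rel 'I_k) n : (exists d, achievable Fadj n d) ->
  achievable Fadj n (L Fadj n) /\ forall d, achievable Fadj n d -> L Fadj n <= d.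
Proof.
move=> [d0 ach0].
apply: (epsilon_spec _ (fun d => achievable Fadj n d /\ forall d', achievable Fadj n d' -> d <= d')).
have exP : exists d, `[< achievable Fadj n d >] by exists d0; apply/asboolP.
by case: (ex_minnP exP) => m /asboolP achm minm; exists m; split => // d /asboolP /minm.
Qed.

Section BoundsOnL.
Variables (k : nat) (Fadj : rel 'I_k) (n : nat).
Hypotheses (irrF : irreflexive Fadj) (conn : connected_graph Fadj) (k2 : 2 <= k).

Lemma L_spec :
  achievable Fadj n (L Fadj n) /\ forall d, achievable Fadj n d -> L Fadj n <= d.
Proof.
apply: L_minimal; have [G [sG freeG _]] := ex_attained n conn k2.
by eexists; apply: achievable_upper_bound irrF conn freeG sG.
Qed.

Lemma L_exa1_lower_bound : k <= n -> 'C(n, 2) <= L Fadj n + exa1 Fadj n.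
Proof. by move=> kn; apply: achievable_lower_bound irrF kn L_spec.1. Qed.

Lemma L_ex_upper_bound : L Fadj n + ex Fadj n <= 'C(n, 2) + k * n.
Proof.
have [G [sG freeG <-]] := ex_attained n conn k2.
have := L_spec.2 _ (achievable_upper_bound irrF conn freeG sG).
have := card_simple sG; lia.
Qed.

End BoundsOnL.

Import Order.TTheory GRing.Theory Num.Theory.
Local Open Scope ring_scope.

Lemma eventually_eps_close (c l x : nat -> nat) (K N0 : nat) :
  (forall n, (N0 <= n)%N -> (c n <= l n + x n + 1)%N) ->
  (forall n, (l n + x n <= c n + K * n)%N) ->
  (forall D, exists N, forall n, (N <= n)%N -> (D * n <= x n)%N) ->
  forall eps : rat, 0 < eps -> exists N, forall n, (N <= n)%N ->
    `|(c n)%:R - (l n)%:R - (x n)%:R| <= eps * (x n)%:R.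
Proof.
move=> lower upper superlin eps eps0.
pose D := Num.Def.archi_bound eps^-1.
have epsD : 1 <= eps * D%:R.
  rewrite -[X in X <= _](mulfV (lt0r_neq0 eps0)) ler_pM2l //; apply/ltW/archi_boundP.
  by rewrite invr_ge0 ltW.
have [N DxN] := superlin (D * K.+1)%N.
exists (maxn N (maxn N0 1)) => n; rewrite !geq_max => /and3P [Nn N0n n1].
have r1 : (c n)%:R <= (l n)%:R + (x n)%:R + 1 :> rat by rewrite -!natrD natr1 ler_nat -addn1 lower.
have r2 : (l n)%:R + (x n)%:R <= (c n)%:R + K%:R * n%:R :> rat by rewrite -natrM -!natrD ler_nat.
have r3 : K.+1%:R * n%:R <= eps * (x n)%:R :> rat.
  apply: le_trans (_ : eps * (D * K.+1 * n)%:R <= _); last by rewrite ler_pM2l // ler_nat DxN.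
  rewrite !natrM (_ : eps * _ = (eps * D%:R) * (K.+1%:R * n%:R)); last by ring.
  by rewrite ler_peMl // mulr_ge0.
have r4 : 1 <= n%:R :> rat by rewrite ler1n.
move: r3; rewrite -natr1 mulrDl mul1r => r3.
have r5 : 0 <= K%:R * n%:R :> rat by rewrite mulr_ge0.
rewrite ler_norml; apply/andP; split; lra.
Qed.

Theorem proposition4p1 (k : nat) (Fadj : rel 'I_k) :
  symmetric Fadj -> irreflexive Fadj -> connected_graph Fadj -> (2 <= k)%N ->
  (exists N : nat, forall n : nat, (N <= n)%N ->
      ('C(n, 2) <= L Fadj n + exa1 Fadj n)%N) /\
  (exists C N : nat, forall n : nat, (N <= n)%N ->
      (L Fadj n + exa1 Fadj n <= 'C(n, 2) + C * n)%N) /\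
  (~ is_tree Fadj ->
     forall eps : rat, 0 < eps ->
     exists N : nat, forall n : nat, (N <= n)%N ->
       `| (('C(n, 2))%:R - (L Fadj n)%:R - (ex Fadj n)%:R : rat) | <=
          eps * (ex Fadj n)%:R).
Proof.
move=> _ irr conn k2.
have exa1_ex n := exa1_le_ex_succ n irr conn k2.
split; first by exists k => n; apply: L_exa1_lower_bound.
split.
  exists k.+1, 1%N => n n1.
  by have := L_ex_upper_bound n irr conn k2; have := exa1_ex n; lia.
move=> ntree; apply: (eventually_eps_close (K := k) (N0 := k)).
- by move=> n kn; have := L_exa1_lower_bound irr conn k2 kn; have := exa1_ex n; lia.
- by move=> n; apply: L_ex_upper_bound.
- exact: ex_superlinear conn ntree.
Qed.
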